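(* For a ring $R$, the following are equivalent: (1) $R$ is a DT ring; (2) $R$ is a semi-tripotent ring.
   Context: All rings are associative with identity. $J(R)$ is the Jacobson radical, $U(R)$ the group of units. $\Delta(R)=\{x\in R: x+u\in U(R)\text{ for all }u\in U(R)\}$. $\mathrm{Tr}(R)=\{x\in R: x^3=x\}$. A ring $R$ is a DT ring if every $r\in R$ can be written $r=e+d$ with $e\in\mathrm{Tr}(R)$ and $d\in\Delta(R)$. A ring $R$ is semi-tripotent if every $r\in R$ can be written $r=e+j$ with $e\in\mathrm{Tr}(R)$ and $j\in J(R)$. *)

From mathcomp Require Import all_boot all_algebra.
Set Implicit Arguments. Unset Strict Implicit. Unset Printing Implicit Defensive.
Import GRing.Theory.
Local Open Scope ring_scope.

Definition left_ideal (R : unitRingType) (I : R -> Prop) : Prop :=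
  [/\ I 0, (forall x y, I x -> I y -> I (x + y)), (forall x, I x -> I (- x))
    & (forall r x, I x -> I (r * x))].

Definition maximal_left_ideal (R : unitRingType) (I : R -> Prop) : Prop :=
  [/\ left_ideal I, ~ I 1
    & forall K : R -> Prop, left_ideal K -> ~ K 1 ->
        (forall x, I x -> K x) -> forall x, K x -> I x].

Definition jacobson (R : unitRingType) (x : R) : Prop :=
  forall I : R -> Prop, maximal_left_ideal I -> I x.

Definition Delta (R : unitRingType) (x : R) : Prop :=
  forall u : R, u \is a GRing.unit -> x + u \is a GRing.unit.

Definition tripotent (R : unitRingType) (x : R) : Prop := x ^+ 3 = x.

Definition DT_ring (R : unitRingType) : Prop :=
  forall r : R, exists e d, [/\ tripotent e, Delta d & r = e + d].

Definition semi_tripotent (R : unitRingType) : Prop :=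
  forall r : R, exists e j, [/\ tripotent e, jacobson j & r = e + j].

From mathcomp Require Import all_boot all_algebra.
From mathcomp Require Import boolp classical_sets.
Set Implicit Arguments. Unset Strict Implicit.
Import GRing.Theory.
Local Open Scope ring_scope.

(* J(R) is contained in Delta(R) in every ring, because 1 - r j is a unit for
   j in J(R).  Conversely, let d be in Delta(R) for a DT ring R.  It suffices
   that 1 - r d is left invertible for every r.  Write r = e + d' with e^3 = e
   and d' in Delta(R); the involution v = e + (1 - e^2) satisfies v e = e^2,
   so v (1 - r d) = u - e^2 d with u = v (1 - d' d) a unit.  Finally u - h d is
   left invertible whenever u is a unit, h is idempotent and d is in Delta(R). *)

Section Delta.
Variable R : unitRingType.
Implicit Types (a b d h u : R).

Lemma DeltaN d : Delta d -> Delta (- d).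
Proof. by move=> Hd u Hu; rewrite -[u]opprK -opprD unitrN Hd ?unitrN. Qed.

Lemma DeltaD a b : Delta a -> Delta b -> Delta (a + b).
Proof. by move=> Ha Hb u Hu; rewrite -addrA Ha ?Hb. Qed.

Lemma Delta_unitMl u d : u \is a GRing.unit -> Delta d -> Delta (u * d).
Proof.
move=> Hu Hd v Hv.
have -> : u * d + v = u * (d + u^-1 * v) by rewrite mulrDr mulVKr.
by rewrite unitrMr // Hd // unitrMl ?unitrV.
Qed.

Lemma DeltaM a b : Delta a -> Delta b -> Delta (a * b).
Proof.
move=> Ha Hb; have -> : a * b = (a + 1) * b - b by rewrite mulrDl mul1r addrK.
apply: DeltaD (DeltaN Hb); apply: Delta_unitMl Hb; exact: Ha (unitr1 R).
Qed.

Lemma unitrBDelta u d : u \is a GRing.unit -> Delta d -> (u - d) \is a GRing.unit.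
Proof. by move=> Hu /DeltaN Hd; rewrite addrC Hd. Qed.

Lemma unitr1Dsqr0 (N : R) : N * N = 0 -> (1 + N) \is a GRing.unit.
Proof.
move=> NN; apply/unitrP; exists (1 - N); split.
- by rewrite mulrDr mulr1 mulrBl mul1r NN subr0 subrK.
- by rewrite mulrBr mulr1 mulrDl mul1r NN addr0 addrK.
Qed.

Lemma unitB_idemM_Delta_linv u h d :
  u \is a GRing.unit -> h * h = h -> Delta d -> exists b, b * (u - h * d) = 1.
Proof.
move=> Hu hh Hd; set f := 1 - h.
have fh : f * h = 0 by rewrite mulrBl mul1r hh subrr.
have hf : h * f = 0 by rewrite mulrBr mulr1 hh subrr.
(* N lies in the Peirce corner (1 - h) R h, so N^2 = 0 and 1 + N is a unit;
   the left multiple (Y - 1) (u - h d) equals d - (1 + N) u, an element of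
   Delta plus a unit. *)
pose N := f * d / u * h; pose Y := f * d / u * f.
have NN : N * N = 0 by rewrite /N !mulrA -(mulrA (f * d / u) h f) hf mulr0 !mul0r.
have N1U : (1 + N) \is a GRing.unit by exact: unitr1Dsqr0.
have key : (Y - 1) * (u - h * d) = d - (1 + N) * u.
  rewrite mulrBr mulrA [(Y - 1) * h]mulrBl mul1r /Y -(mulrA (f * d / u) f h) fh.
  rewrite mulr0 sub0r mulNr opprK.
  rewrite mulrBl mul1r -(mulrA (f * d / u) f u) [f * u]mulrBl mul1r mulrBr.
  rewrite mulrA divrK // -/N.
  rewrite /f mulrBl mul1r mulrDl mul1r opprD addrA.
  by rewrite [LHS]addrAC [X in X - u]addrAC subrK [LHS]addrAC.
exists ((d - (1 + N) * u)^-1 * (Y - 1)); rewrite -mulrA key mulVr //.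
by apply: Hd; rewrite unitrN unitrMr.
Qed.
End Delta.

Section Tripotent.
Variables (R : unitRingType) (e : R).
Hypothesis e3 : tripotent e.

Lemma tripotent_idem_sqr : e ^+ 2 * e ^+ 2 = e ^+ 2.
Proof. by rewrite -exprD (exprS e 3) e3 -expr2. Qed.

(* Every tripotent is e = v e^2 with v an involution and e^2 idempotent. *)
Definition tripotent_invol := e + (1 - e ^+ 2).

Lemma tripotent_involK : tripotent_invol * tripotent_invol = 1.
Proof.
have ef : e * (1 - e ^+ 2) = 0 by rewrite mulrBr mulr1 -exprS e3 subrr.
have fe : (1 - e ^+ 2) * e = 0 by rewrite mulrBl mul1r -exprSr e3 subrr.
have ff : (1 - e ^+ 2) * (1 - e ^+ 2) = 1 - e ^+ 2.
  by rewrite mulrBr mulr1 mulrBl mul1r tripotent_idem_sqr subrr subr0.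
rewrite /tripotent_invol mulrDl [e * _]mulrDr [(1 - _) * _]mulrDr ef fe ff.
by rewrite -expr2 addr0 add0r addrC subrK.
Qed.

Lemma tripotent_involMe : tripotent_invol * e = e ^+ 2.
Proof. by rewrite /tripotent_invol mulrDl mulrBl mul1r -expr2 -exprSr e3 subrr addr0. Qed.

End Tripotent.

Section Jacobson.
Variable R : unitRingType.
Implicit Types (x z : R) (I L : R -> Prop).

Lemma principal_left_ideal z : left_ideal (fun y => exists a, y = a * z).
Proof.
split.
- by exists 0; rewrite mul0r.
- by move=> _ _ [a ->] [b ->]; exists (a + b); rewrite mulrDl.
- by move=> _ [a ->]; exists (- a); rewrite mulNr.
- by move=> r _ [a ->]; exists (r * a); rewrite mulrA.
Qed.

Lemma left_ideal_add_principal I x :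
  left_ideal I -> left_ideal (fun y => exists i r, I i /\ y = i + r * x).
Proof.
case=> I0 ID IN IM; split.
- by exists 0, 0; rewrite mul0r addr0.
- move=> _ _ [i [r [Ii ->]]] [j [s [Ij ->]]]; exists (i + j), (r + s).
  by split; [exact: ID | rewrite mulrDl addrACA].
- move=> _ [i [r [Ii ->]]]; exists (- i), (- r).
  by split; [exact: IN | rewrite opprD mulNr].
- move=> s _ [i [r [Ii ->]]]; exists (s * i), (s * r).
  by split; [exact: IM | rewrite mulrDr mulrA].
Qed.

Lemma left_ideal_bigcup_chain (F : set (set R)) x0 :
  (forall X x, F X -> X x -> left_ideal X) -> total_on F subset ->
  (exists2 X, F X & X x0) -> left_ideal (\bigcup_(X in F) X)%classic.
Proof.
move=> FI Ftot [X0 FX0 X0x0]; split.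
- by exists X0 => //; case: (FI _ _ FX0 X0x0).
- move=> a b [Xa FXa Xaa] [Xb FXb Xbb].
  case: (Ftot _ _ FXa FXb) => [sab|sba].
  + exists Xb => //; case: (FI _ _ FXb Xbb) => _ D _ _.
    by apply: D => //; exact: sab.
  + exists Xa => //; case: (FI _ _ FXa Xaa) => _ D _ _.
    by apply: D => //; exact: sba.
- by move=> a [X FX Xa]; exists X => //; case: (FI _ _ FX Xa) => _ _ N _; exact: N.
- by move=> r a [X FX Xa]; exists X => //; case: (FI _ _ FX Xa) => _ _ _ M; exact: M.
Qed.

Lemma maximal_left_ideal_above L : left_ideal L -> ~ L 1 ->
  exists2 I, maximal_left_ideal I & forall x, L x -> I x.
Proof.
move=> LI L1.
(* The nonemptiness guard lets the empty chain (whose union is set0) satisfy P. *)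
pose P (X : set R) := (exists x, X x) ->
  [/\ left_ideal X, ~ X 1 & forall x, L x -> X x].
have [M [PM Mmax]] : exists M, P M /\ forall X, (M `<` X)%classic -> ~ P X.
  apply: Zorn_bigcup => F FP Ftot [x0 [X FX Xx0]].
  have [_ _ LX] := FP X FX (ex_intro _ x0 Xx0).
  split.
  - apply: (left_ideal_bigcup_chain (x0 := x0)) => // [Y y FY Yy|].
      by case: (FP Y FY (ex_intro _ y Yy)).
    by exists X.
  - by case=> Y FY Y1; case: (FP Y FY (ex_intro _ 1 Y1)).
  - by move=> x Lx; exists X => //; exact: LX.
have [MI M1 LM] : [/\ left_ideal M, ~ M 1 & forall x, L x -> M x].
  apply: PM; apply: contrapT => nM; apply: (Mmax L) => //; split.
    by move=> x Mx; case: nM; exists x.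
  by move=> LsubM; case: nM; exists 0; apply: LsubM; case: LI.
exists M => //; split => // K KI K1 MK x Kx.
apply: contrapT => nMx; apply: (Mmax K).
  by split => // KM; apply: nMx; exact: KM.
by move=> _; split => // y Ly; apply: MK; exact: LM.
Qed.

Lemma jacobsonP x :
  jacobson x <-> forall r, exists a, a * (1 - r * x) = 1.
Proof.
split=> [Jx r | linv I [[I0 ID IN IM] I1 Imax]].
- apply: contrapT => nlinv.
  have [|I MI LI] :=
    maximal_left_ideal_above (principal_left_ideal (1 - r * x)).
    by case=> a /esym Ha; apply: nlinv; exists a.
  have [[_ ID _ IM] I1 _] := MI.
  have Irx : I (r * x) by apply: IM; exact: Jx.
  apply: I1; rewrite -(subrK (r * x) 1); apply: ID => //.
  by apply: LI; exists 1; rewrite mul1r.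
- apply: contrapT => nIx.
  have [i [r [Ii Hi]]] : exists i r, I i /\ 1 = i + r * x.
    apply: contrapT => nK; apply: nIx.
    apply: (Imax _ (left_ideal_add_principal x (And4 I0 ID IN IM)) nK).
      by move=> y Iy; exists y, 0; rewrite mul0r addr0.
    by exists 0, 1; rewrite add0r mul1r.
  have [a Ha] := linv r.
  apply: I1; rewrite -Ha; apply: IM.
  by rewrite Hi addrK.
Qed.

Lemma jacobson_unit x r : jacobson x -> (1 - r * x) \is a GRing.unit.
Proof.
move=> Jx; have [a Ha] := (jacobsonP x).1 Jx r.
have [b Hb] := (jacobsonP x).1 Jx (- (a * r)).
have ea : 1 - (- (a * r)) * x = a.
  by rewrite mulNr opprK -Ha mulrBr mulr1 mulrA subrK.
rewrite ea in Hb.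
have eb : b = 1 - r * x by rewrite -[b]mulr1 -{1}Ha mulrA Hb mul1r.
by apply/unitrP; exists a; split; last rewrite -eb.
Qed.

Lemma jacobson_Delta x : jacobson x -> Delta x.
Proof.
move=> Jx u Hu.
have -> : x + u = u * (1 - (- u^-1) * x).
  by rewrite mulNr opprK mulrDr mulr1 mulVKr // addrC.
by rewrite unitrMr // jacobson_unit.
Qed.

End Jacobson.

Lemma DT_Delta_jacobson (R : unitRingType) (d : R) :
  DT_ring R -> Delta d -> jacobson d.
Proof.
move=> DT Hd; apply/jacobsonP => r.
have [e [d' [e3 Hd' ->]]] := DT r.
set v := tripotent_invol e.
have vU : v \is a GRing.unit by apply/unitrP; exists v; rewrite tripotent_involK.
have uU : v * (1 - d' * d) \is a GRing.unit.
  by rewrite unitrMl //; apply: unitrBDelta (unitr1 R) (DeltaM Hd' Hd).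
have [b Hb] := unitB_idemM_Delta_linv uU (tripotent_idem_sqr e3) Hd.
exists (b * v); rewrite -mulrA -[RHS]Hb; congr (b * _).
rewrite -(tripotent_involMe e3) -/v -mulrA -mulrBr; congr (v * _).
by rewrite mulrDl opprD addrA addrAC.
Qed.

Theorem corollary4p9 (R : unitRingType) : DT_ring R <-> semi_tripotent R.
Proof.
split=> [DT | ST] r.
- have [e [d [e3 Hd ->]]] := DT r.
  by exists e, d; split => //; exact: DT_Delta_jacobson.
- have [e [j [e3 Jj ->]]] := ST r.
  by exists e, j; split => //; exact: jacobson_Delta.
Qed.
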